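(* Let $p$ be an odd prime, let $G_p=V\rtimes C$ be as described in the context, and let $c$ be a fixed generator of $C$. Let $X=\{c,w_2,\dots,w_n\}$ where $w_2,\dots,w_n\in V$, and assume $X$ generates $G_p$. Then every $v\in V$ can be written as a word of length at most $3(p-1)$ in $X$ (inverses permitted) in which the elements $w_2,\dots,w_n$ occur a total of at most $p-1$ times.
   Context: The wreath product $W_p=C_2\wr C_p$ is $U\rtimes C_p$ with $U=\mathbb{F}_2^{\,p}$ and a generator of the cyclic group $C_p$ of order $p$ acting on $U$ by cyclically permuting coordinates. Its center is $T=\{(0,\dots,0),(1,\dots,1)\}$, and $G_p=W_p/T=V\rtimes C$, where $V=U/T$ is an $\mathbb{F}_2$-vector space of dimension $p-1$ (a normal subgroup of $G_p$) and $C$, the image of $C_p$, is cyclic of order $p$. *)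

(* Concrete model of W_p = C_2 wr C_p and G_p = W_p / T. *)
From mathcomp Require Import all_boot.
Set Implicit Arguments. Unset Strict Implicit. Unset Printing Implicit Defensive.

(* U = F_2^p, coordinates indexed by 'I_p, F_2 modelled by bool with xor. *)
Definition U (p : nat) := {ffun 'I_p -> bool}.

(* The generator of C_p acts by cyclically permuting coordinates:
   (shift u) i = u (i - 1 mod p). *)
Definition shift (p : nat) (u : U p) : U p := [ffun i => u (ord_pred i)].

(* Elements of W_p = U x| C_p: pairs (u, a), a read modulo p;
   (u, a) * (v, b) = (u + c^a . v, a + b). *)
Definition W (p : nat) := (U p * nat)%type.

Definition wmul (p : nat) (x y : W p) : W p :=
  ([ffun i => x.1 i (+) iter x.2 (@shift p) y.1 i], (x.2 + y.2) %% p).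

Definition wone (p : nat) : W p := ([ffun => false], 0).

Definition winv (p : nat) (x : W p) : W p :=
  let b := (p - x.2 %% p) %% p in (iter b (@shift p) x.1, b).

(* Equality in G_p = W_p / T, T = {0, (1,...,1)}: same C_p-component mod p
   and U-components differing by an element of T. *)
Definition eqG (p : nat) (x y : W p) : bool :=
  (x.2 == y.2 %[mod p]) && ((x.1 == y.1) || (x.1 == [ffun i => y.1 i (+) true])).

(* A letter (e, i) denotes the i-th generator of a list xs, inverted iff e. *)
Definition letter := (bool * nat)%type.

Definition eval_word (p : nat) (xs : seq (W p)) (w : seq letter) : W p :=
  foldr (fun l acc =>
           wmul (let g := nth (wone p) xs l.2 in if l.1 then winv g else g) acc)
        (wone p) w.

Definition word_over (n : nat) (w : seq letter) : bool := all (fun l => l.2 < n) w.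

(* The generating list X = (c, w_2, ..., w_n) with c = image of (0, k) in C
   and w_j = image of (w_j, 0) in V. *)
Definition gens (p k : nat) (ws : seq (U p)) : seq (W p) :=
  ([ffun => false], k) :: [seq (w, 0) | w <- ws].

Definition generates (p : nat) (xs : seq (W p)) : Prop :=
  forall g : W p, exists w, word_over (size xs) w /\ eqG (eval_word xs w) g.

From mathcomp Require Import all_boot zify.
Set Implicit Arguments. Unset Strict Implicit. Unset Printing Implicit Defensive.

(* The conjugates c^t w_j c^-t (t < p) span V, so the V-component of any word
   in X is a sum over a set S of such conjugates.  As V = F_2^p / T has
   2^(p-1) elements, if |S| >= p then two distinct subsets of S have the same
   sum in V, and their symmetric difference can be removed from S; hence
   |S| <= p - 1 may be assumed.  The sum over S is then realised by the word
   that, for t = 0, ..., p - 1, lists the w_j with (t, j) in S followed by one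
   letter c: there the letters of level t are preceded by t letters c.  It has
   at most p - 1 letters w_j and at most 2p - 1 <= 3(p - 1) letters in all. *)

Section XorSums.
Variables (D I : finType).
Implicit Types (f : I -> {ffun D -> bool}) (A B R S : {set I}) (u : {ffun D -> bool}).

Definition xsum f S : {ffun D -> bool} := [ffun d => \big[addb/false]_(x in S) f x d].

(* [exists b, u = addc b v] says that u and v differ by an element of
   T = {(0,...,0), (1,...,1)}. *)
Definition addc (b : bool) u : {ffun D -> bool} := [ffun d => u d (+) b].

Definition symdiff A B := (A :\: B) :|: (B :\: A).

Lemma addc0 u : addc false u = u.
Proof. by apply/ffunP => d; rewrite ffunE addbF. Qed.

Lemma addc_addc b c u : addc b (addc c u) = addc (c (+) b) u.
Proof. by apply/ffunP => d; rewrite !ffunE addbA. Qed.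

Lemma symdiff_eq0 A B : (symdiff A B == set0) = (A == B).
Proof. by rewrite setU_eq0 !setD_eq0 eqEsubset. Qed.

Lemma symdiff_subset A B S : A \subset S -> B \subset S -> symdiff A B \subset S.
Proof. by move=> AS BS; rewrite subUset !(subset_trans (subsetDl _ _)). Qed.

Lemma symdiffE_subset S R : R \subset S -> symdiff S R = S :\: R.
Proof. by rewrite -setD_eq0 /symdiff => /eqP ->; rewrite setU0. Qed.

Lemma xsum_symdiff f A B :
  xsum f (symdiff A B) = [ffun d => xsum f A d (+) xsum f B d].
Proof.
apply/ffunP => d; rewrite !ffunE big_mkcond [in RHS]big_mkcond.
rewrite [X in _ (+) X]big_mkcond -big_split /=.
by apply: eq_bigr => x _; rewrite !inE; case: (x \in A); case: (x \in B); case: (f x d).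
Qed.

Lemma eq_xsum f g S : f =1 g -> xsum f S = xsum g S.
Proof. by move=> fg; apply/ffunP => d; rewrite !ffunE; apply: eq_bigr => x _; rewrite fg. Qed.

Lemma xsum_imset f (h : I -> I) S : injective h -> xsum f (h @: S) = xsum (f \o h) S.
Proof. by move=> h_inj; apply/ffunP => d; rewrite !ffunE big_imset //; apply: in2W. Qed.

Variable d0 : D.

Lemma xsum_const_subset f S : #|D| <= #|S| ->
  exists2 R : {set I}, (R \subset S) && (R != set0) & exists b, xsum f R = [ffun => b].
Proof.
move=> DS; pose g A := addc (xsum f A d0) (xsum f A).
have /dinjectivePn [A SA [B /andP [BA SB] gAB]] : ~~ dinjectiveb g (powerset S).
  apply/negP => /dinjectiveP /card_in_imset g_card.
  have img_g : g @: powerset S \subset [set u : {ffun D -> bool} | ~~ u d0].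
    by apply/subsetP => _ /imsetP [A _ ->]; rewrite inE ffunE addbb.
  have : [set u : {ffun D -> bool} | ~~ u d0] \proper [set: {ffun D -> bool}].
    by rewrite properT; apply/eqP => /setP /(_ [ffun => true]); rewrite !inE ffunE.
  move/proper_card/(leq_ltn_trans (subset_leq_card img_g)).
  by rewrite g_card card_powerset cardsT card_ffun card_bool ltn_exp2l // ltnNge DS.
rewrite !powersetE in SA SB.
exists (symdiff A B); first by rewrite symdiff_subset //= symdiff_eq0 eq_sym.
exists (xsum f A d0 (+) xsum f B d0); rewrite xsum_symdiff.
move: gAB; rewrite /g; move: (xsum f A) (xsum f B) => a b /ffunP gab.
apply/ffunP => d; move: (gab d); rewrite !ffunE.
by case: (a d) (a d0) (b d) (b d0) => [] [] [] [].
Qed.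

Lemma xsum_small_support f S :
  exists2 S' : {set I}, #|S'| < #|D| & exists b, xsum f S' = addc b (xsum f S).
Proof.
have [n leSn] := ubnP #|S|; elim: n => // n IHn in S leSn *.
have [S_small | S_large] := ltnP #|S| #|D|.
  by exists S => //; exists false; rewrite addc0.
have [R /andP [RS R_nz] [b Rb]] := xsum_const_subset f S_large.
have [|S' S'_small [c S'E]] := IHn (S :\: R).
  have R_gt0 : 0 < #|R| by rewrite card_gt0.
  by rewrite cardsDS //; have := subset_leq_card RS; lia.
exists S' => //; exists (b (+) c).
rewrite S'E -symdiffE_subset // xsum_symdiff Rb -addc_addc; congr addc.
by apply/ffunP => d; rewrite !ffunE.
Qed.

End XorSums.

Section GroupLaw.
Variable p : nat.
Implicit Types (u : U p).

Lemma ord_pred_val (i : 'I_p) : val (ord_pred i) = (i + (p - 1)) %% p.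
Proof. by rewrite /=; congr (_ %% _); have := ltn_ord i; lia. Qed.

Lemma iter_ord_pred_val (i : 'I_p) a : val (iter a (@ord_pred p) i) = (i + a * (p - 1)) %% p.
Proof.
elim: a => [|a IHa]; first by rewrite /= addn0 modn_small.
by rewrite iterS ord_pred_val IHa modnDml mulSnr addnA.
Qed.

Lemma iter_shiftE a u : iter a (@shift p) u = [ffun i => u (iter a (@ord_pred p) i)].
Proof.
elim: a => [|a IHa]; first by apply/ffunP => i; rewrite ffunE.
by apply/ffunP => i; rewrite iterS IHa !ffunE -iterSr.
Qed.

Lemma iter_shift_mod a b u : a = b %[mod p] -> iter a (@shift p) u = iter b (@shift p) u.
Proof.
move=> eq_ab; rewrite !iter_shiftE; apply/ffunP => i; rewrite !ffunE; congr (u _).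
apply: val_inj; rewrite /= !iter_ord_pred_val; apply/eqP; rewrite eqn_modDl.
by rewrite -modnMml eq_ab modnMml.
Qed.

Lemma iter_shift_const a b : iter a (@shift p) [ffun => b] = [ffun => b].
Proof. by rewrite iter_shiftE; apply/ffunP => i; rewrite !ffunE. Qed.

Lemma iter_shift_xsum (I : finType) a (f : I -> U p) (S : {set I}) :
  iter a (@shift p) (xsum f S) = xsum (fun x => iter a (@shift p) (f x)) S.
Proof.
apply/ffunP => i; rewrite iter_shiftE !ffunE.
by apply: eq_bigr => x _; rewrite iter_shiftE ffunE.
Qed.

Lemma wmul_C_fst a (y : W p) : (wmul ([ffun => false], a) y).1 = iter a (@shift p) y.1.
Proof. by apply/ffunP => i; rewrite !ffunE. Qed.

Lemma wmul_V_fst u (y : W p) : (wmul (u, 0) y).1 = [ffun i => u i (+) y.1 i].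
Proof. by apply/ffunP => i; rewrite !ffunE. Qed.

Lemma eqGP (x y : W p) : reflect (x.2 = y.2 %[mod p] /\ exists b, x.1 = addc b y.1) (eqG x y).
Proof.
apply: (iffP andP) => [[/eqP eq2 /orP [] /eqP eq1] | [/eqP eq2 [[] eq1]]]; split => //.
- by exists false; rewrite addc0.
- by exists true.
- by apply/orP; right; apply/eqP.
- by apply/orP; left; rewrite eq1 addc0.
Qed.

End GroupLaw.

Lemma eval_word_cons p (xs : seq (W p)) (l : letter) w :
  eval_word xs (l :: w) =
  wmul (let g := nth (wone p) xs l.2 in if l.1 then winv g else g) (eval_word xs w).
Proof. by []. Qed.

Lemma eval_word_lt p (xs : seq (W p)) w : 0 < p -> (eval_word xs w).2 < p.
Proof. by case: w => [|l w] //= p_gt0; rewrite ltn_pmod. Qed.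

Section Words.
Variables (p k : nat) (ws : seq (U p)).
Hypothesis p_gt0 : 0 < p.
Implicit Types (u : U p).

Local Notation n := (size ws).
Local Notation eval := (eval_word (gens k ws)).
Local Notation wj j := (nth [ffun => false] ws j).

(* The V-component of c^t w_j c^-t for x = (t, j). *)
Definition conj_gen (x : 'I_p * 'I_n) : U p := iter (k * x.1) (@shift p) (wj x.2).

Definition spanned (u : U p) := exists S, u = xsum conj_gen S.

Lemma spanned0 : spanned [ffun => false].
Proof. by exists set0; apply/ffunP => i; rewrite !ffunE big_set0. Qed.

Lemma spanned_add_gen (j : 'I_n) u : spanned u -> spanned [ffun i => wj j i (+) u i].
Proof.
move=> [S ->]; exists (symdiff [set (Ordinal p_gt0, j)] S).
by rewrite xsum_symdiff; apply/ffunP => i; rewrite !ffunE big_set1 /conj_gen /= muln0.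
Qed.

Definition rotate (x : 'I_p * 'I_n) := (ordS x.1, x.2).

Lemma rotate_inj : injective rotate.
Proof. by apply: (can_inj (g := fun x => (ord_pred x.1, x.2))) => -[t j]; rewrite /= ordSK. Qed.

Lemma conj_gen_rotate x : conj_gen (rotate x) = iter k (@shift p) (conj_gen x).
Proof. by rewrite /conj_gen -iterD; apply: iter_shift_mod; rewrite /= modnMmr mulnS. Qed.

Lemma spanned_shift u : spanned u -> spanned (iter k (@shift p) u).
Proof.
move=> [S ->]; exists (rotate @: S).
rewrite iter_shift_xsum xsum_imset; last exact: rotate_inj.
by apply: eq_xsum => x; rewrite /= conj_gen_rotate.
Qed.

Lemma spanned_iter_shift a u : spanned u -> spanned (iter (k * a) (@shift p) u).
Proof.
by move=> span_u; rewrite mulnC iterM; elim: a => //= a IHa; apply: spanned_shift.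
Qed.

Lemma modn_opp_mul_pred : (p - k %% p) %% p = k * (p - 1) %[mod p].
Proof.
have e1 : (p - k %% p + k) %% p = 0 by rewrite -modnDmr subnK ?modnn // ltnW // ltn_pmod.
have e2 : (k * (p - 1) + k) %% p = 0 by rewrite -mulnSr subn1 prednK // modnMl.
by apply/eqP; rewrite -(eqn_modDr k) modnDml e1 e2.
Qed.

Lemma winv_V u : winv (u, 0) = (u, 0).
Proof. by rewrite /winv /= mod0n subn0 modnn. Qed.

Lemma span_word w : word_over n.+1 w -> spanned (eval w).1.
Proof.
elim: w => [_|[e j] w IHw /andP [lt_j /IHw span_w]]; first exact: spanned0.
rewrite eval_word_cons; case: j lt_j => [_|j lt_j]; rewrite [X in wmul X _]/=.
  case: e; last by rewrite wmul_C_fst; apply: spanned_shift.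
  rewrite /winv [X in wmul X _]/= iter_shift_const wmul_C_fst.
  by rewrite (iter_shift_mod _ modn_opp_mul_pred); apply: spanned_iter_shift.
rewrite (nth_map [ffun => false]) //.
case: e lt_j => lt_j; rewrite ?winv_V wmul_V_fst.
  all: exact: (spanned_add_gen (Ordinal (lt_j : j < n))).
Qed.

Definition gen_letters (s : seq 'I_n) : seq letter := [seq (false, (val j).+1) | j <- s].

Definition level (S : {set 'I_p * 'I_n}) (t : nat) := [set x in S | val x.1 == t].

Definition level_word S t : seq letter :=
  gen_letters [seq x.2 | x <- enum (level S t)] ++ [:: (false, 0)].

Definition spread_word S a m : seq letter := flatten [seq level_word S t | t <- iota a m].

Lemma eval_gen_letters s w :
  eval (gen_letters s ++ w) =
  ([ffun i => \big[addb/false]_(j <- s) wj j i (+) (eval w).1 i], (eval w).2).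
Proof.
elim: s => [|j s IHs].
  rewrite cat0s; case: (eval w) => u a; congr (_, _).
  by apply/ffunP => i; rewrite ffunE big_nil.
rewrite [gen_letters _ ++ _]/= eval_word_cons IHs [X in wmul X _]/=.
rewrite (nth_map [ffun => false]) //.
rewrite /wmul /= add0n modn_small ?eval_word_lt //; congr (_, _).
by apply/ffunP => i; rewrite !ffunE big_cons addbA.
Qed.

Lemma eval_spread_word S a m :
  eval (spread_word S a m) =
  (xsum (fun x : 'I_p * 'I_n => iter (k * (x.1 - a)) (@shift p) (wj x.2))
        [set x in S | a <= x.1 < a + m],
   (k * m) %% p).
Proof.
elim: m a => [|m IHm] a.
  rewrite muln0 mod0n; congr (_, _); apply/ffunP => i; rewrite !ffunE big1 // => x.
  by rewrite !inE addn0 ltnNge andbN andbF.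
have -> : spread_word S a m.+1 =
          gen_letters [seq x.2 | x <- enum (level S a)] ++ (false, 0) :: spread_word S a.+1 m.
  by rewrite /spread_word /= /level_word -catA.
rewrite eval_gen_letters eval_word_cons IHm; congr (_, _); last first.
  by rewrite /= modnDmr mulnS.
rewrite [X in wmul X _]/= wmul_C_fst iter_shift_xsum; apply/ffunP => i.
rewrite !ffunE big_map big_enum big_mkcond [X in _ (+) X]big_mkcond [RHS]big_mkcond.
rewrite -big_split.
apply: eq_bigr => x _; rewrite !inE; case: (x \in S) => //=.
case: (ltngtP x.1 a) => [//|gt_a|->].
  by rewrite addSnnS -iterD -mulnS subnSK.
by rewrite addnS ltnS leq_addr subnn muln0 addbF.
Qed.

Lemma eval_spread_word_full S : eval (spread_word S 0 p) = (xsum conj_gen S, 0).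
Proof.
rewrite eval_spread_word modnMl; congr (_, _).
have -> : [set x in S | 0 <= x.1 < 0 + p] = S by apply/setP => x; rewrite inE /= ltn_ord andbT.
by apply: eq_xsum => x; rewrite subn0.
Qed.

Lemma sum_card_level S : \sum_(t <- iota 0 p) #|level S t| = #|S|.
Proof.
have -> : iota 0 p = index_iota 0 p by rewrite /index_iota subn0.
rewrite big_mkord -sum1_card (partition_big (fun x => x.1) xpredT) //=.
by apply: eq_bigr => t _; rewrite -sum1_card; apply: eq_bigl => x; rewrite inE.
Qed.

Lemma count_gen_letters s : count (fun l : letter => l.2 != 0) (gen_letters s) = size s.
Proof. by elim: s => //= j s ->. Qed.

Lemma count_spread_word S : count (fun l : letter => l.2 != 0) (spread_word S 0 p) = #|S|.
Proof.
rewrite count_flatten -map_comp -sum_card_level sumnE big_map; apply: eq_bigr => t _.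
by rewrite /= count_cat count_gen_letters addn0 size_map -cardE.
Qed.

Lemma size_spread_word S : size (spread_word S 0 p) = #|S| + p.
Proof.
rewrite size_flatten /shape -map_comp sumnE big_map.
rewrite (eq_bigr (fun t => #|level S t| + 1)) => [|t _]; last first.
  by rewrite /= size_cat !size_map -cardE.
by rewrite big_split /= sum_card_level sum1_size size_iota.
Qed.

Lemma spread_word_over S a m : word_over n.+1 (spread_word S a m).
Proof.
apply/allP => l /flattenP [s /mapP [t _ ->]].
by rewrite mem_cat => /orP [/mapP [j _ ->] | /predU1P [-> | //]]; rewrite //= ltnS ltn_ord.
Qed.

End Words.

Unset Implicit Arguments.

Theorem lemma5 (p : nat) (hp : prime p) (hodd : odd p)
  (k : nat) (hk : ~~ (p %| k)) (ws : seq (U p))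
  (hgen : generates (gens k ws)) :
  forall v : U p, exists w : seq letter,
    [/\ word_over (size ws).+1 w,
        size w <= 3 * (p - 1),
        count (fun l : letter => l.2 != 0) w <= p - 1
      & eqG (eval_word (gens k ws) w) (v, 0)].
Proof.
move=> v; have p_gt0 := prime_gt0 hp; have p_gt1 := prime_gt1 hp.
have [w [w_over /eqGP [_ [b wE]]]] := hgen (v, 0).
rewrite /= size_map in w_over.
have [S SE] := span_word k p_gt0 w_over.
have [S' S'_small [b' S'E]] := xsum_small_support (Ordinal p_gt0) (@conj_gen p k ws) S.
rewrite card_ord in S'_small.
exists (spread_word S' 0 p); rewrite size_spread_word count_spread_word.
set s := #|S'| in S'_small *; split; [exact: spread_word_over | lia | lia |].
apply/eqGP; rewrite eval_spread_word_full //; split=> //; exists (b (+) b').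
by rewrite S'E -SE wE addc_addc.
Qed.
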